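(* For any integer $m\ge1$ there exists $\varepsilon>0$ small enough such that on $I(m,\varepsilon)$, with $f_1,f_2,f_3$ the first three eigenfunctions of the Laplacian: (a) the first three eigenvalues are simple; (b) $f_2\circ\psi=-f_2$ and $N(f_2)=m$; (c) $f_3\circ\psi=f_3$ and $N(f_3)=2$.
   Context: $I(m,\varepsilon)$ is the metric graph with vertices $v_1,v_2,v_3,v_4$, an edge $e_1$ of length $1/2$ from $v_1$ to $v_2$, an edge $e_2$ of length $1/2$ from $v_3$ to $v_4$, and $m$ parallel edges of length $\varepsilon$ joining $v_2$ and $v_3$. The Laplacian $-\frac{d^2}{dx^2}$ acts edgewise with Dirichlet conditions at $v_1,v_4$ and Neumann–Kirchhoff conditions (continuity and vanishing sum of outgoing derivatives) at $v_2,v_3$; eigenvalues are ordered increasingly with multiplicity, with $L^2$-orthogonal eigenfunctions $f_1,f_2,\dots$. $\psi:I(m,\varepsilon)\to I(m,\varepsilon)$ is the reflection symmetry exchanging $v_1\leftrightarrow v_4$, $v_2\leftrightarrow v_3$, mapping $e_1$ isometrically onto $e_2$ and each small edge onto itself with orientation reversed. $N(f)$ is the number of zeroes of $f$ other than at $v_1,v_4$. *)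

From Stdlib Require Import Reals Lra List.
From Coquelicot Require Import Coquelicot.
Open Scope R_scope.

(* A function on the metric graph I(m,eps), given edgewise.
   e1 : coordinate x in [0,1/2], x = 0 is v1, x = 1/2 is v2.
   e2 : coordinate x in [0,1/2], x = 0 is v3, x = 1/2 is v4.
   small edge k (k < m) : coordinate x in [0,eps], x = 0 is v2, x = eps is v3. *)
Record gfun := mkGfun { ge1 : R -> R; ge2 : R -> R; gs : nat -> R -> R }.

Definition gzero : gfun := mkGfun (fun _ => 0) (fun _ => 0) (fun _ _ => 0).
Definition gscale (c : R) (f : gfun) : gfun :=
  mkGfun (fun x => c * ge1 f x) (fun x => c * ge2 f x) (fun k x => c * gs f k x).
Definition gopp (f : gfun) : gfun := gscale (-1) f.

Definition geq (m : nat) (eps : R) (f g : gfun) : Prop :=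
  (forall x, 0 <= x <= 1/2 -> ge1 f x = ge1 g x) /\
  (forall x, 0 <= x <= 1/2 -> ge2 f x = ge2 g x) /\
  (forall k, (k < m)%nat -> forall x, 0 <= x <= eps -> gs f k x = gs g k x).

Definition psi_comp (eps : R) (f : gfun) : gfun :=
  mkGfun (fun x => ge2 f (1/2 - x)) (fun x => ge1 f (1/2 - x))
         (fun k x => gs f k (eps - x)).

Definition sumk (m : nat) (F : nat -> R) : R :=
  fold_right Rplus 0 (map F (seq 0 m)).

(* edgewise equation  -u'' = lam u  (solutions are smooth; we take the
   unique smooth extension to the whole line). *)
Definition edge_ode (lam : R) (u : R -> R) : Prop :=
  forall x, ex_derive u x /\ ex_derive (Derive u) x /\
            - Derive (Derive u) x = lam * u x.

(* f is an eigenfunction (possibly zero) of the Laplacian on I(m,eps) with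
   Dirichlet conditions at v1, v4 and Neumann-Kirchhoff conditions at v2, v3,
   for the eigenvalue lam. *)
Definition is_eigfun (m : nat) (eps lam : R) (f : gfun) : Prop :=
  edge_ode lam (ge1 f) /\ edge_ode lam (ge2 f) /\
  (forall k, (k < m)%nat -> edge_ode lam (gs f k)) /\
  ge1 f 0 = 0 /\ ge2 f (1/2) = 0 /\
  (forall k, (k < m)%nat -> gs f k 0 = ge1 f (1/2)) /\
  (forall k, (k < m)%nat -> gs f k eps = ge2 f 0) /\
  (* Kirchhoff at v2: sum of outgoing derivatives vanishes *)
  - Derive (ge1 f) (1/2) + sumk m (fun k => Derive (gs f k) 0) = 0 /\
  Derive (ge2 f) 0 - sumk m (fun k => Derive (gs f k) eps) = 0.

Definition is_eigenvalue (m : nat) (eps lam : R) : Prop :=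
  exists f, is_eigfun m eps lam f /\ ~ geq m eps f gzero.

Definition simple_eig (m : nat) (eps lam : R) (f : gfun) : Prop :=
  is_eigfun m eps lam f /\ ~ geq m eps f gzero /\
  forall g, is_eigfun m eps lam g -> exists c, geq m eps g (gscale c f).

(* Points of I(m,eps) other than v1, v4, each with a unique representative:
   v2 is PE1 (1/2), v3 is PE2 0, small edges contribute interior points. *)
Inductive gpoint := PE1 (x : R) | PE2 (x : R) | PS (k : nat) (x : R).

Definition valid_pt (m : nat) (eps : R) (p : gpoint) : Prop :=
  match p with
  | PE1 x => 0 < x <= 1/2
  | PE2 x => 0 <= x < 1/2
  | PS k x => (k < m)%nat /\ 0 < x < eps
  end.

Definition geval (f : gfun) (p : gpoint) : R :=
  match p with
  | PE1 x => ge1 f x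
  | PE2 x => ge2 f x
  | PS k x => gs f k x
  end.

Definition num_zeros (m : nat) (eps : R) (f : gfun) (n : nat) : Prop :=
  exists l : list gpoint, NoDup l /\ length l = n /\
    forall p, In p l <-> (valid_pt m eps p /\ geval f p = 0).

(* Write an eigenvalue as [lam = (2 th)^2].  An eigenfunction is [A sin (2 th x)] on e1 and
   [D sin (2 th (1/2 - x))] on e2, and continuity at v2, v3 determines it on every small edge;
   the two Kirchhoff conditions then become [(A + D) even_secular th = 0] and
   [(A - D) odd_secular th = 0], the two factors governing the modes even and odd under psi.
   For [eps < 1/3] the half-edge phase [eps th] lies in (0, PI/2) whenever [th <= 3 PI/2], and
   quadrant-by-quadrant sign and monotonicity arguments show that on (0, 3 PI/2]
   [even_secular] vanishes exactly at some [t1] in (0, PI/2) and [t3] in (PI, 3 PI/2), and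
   [odd_secular] exactly at some [t2] in (PI/2, PI).  Nonpositive eigenvalues are excluded by
   Green's formula.  The odd mode at [t2] vanishes only at the midpoints of the [m] small edges,
   the even mode at [t3] only at one interior point of each long edge. *)

From Stdlib Require Import Reals List Lra Lia.
From Coquelicot Require Import Coquelicot.
Open Scope R_scope.

Lemma sumk_S m F : sumk (S m) F = sumk m F + F m.
Proof.
  unfold sumk. rewrite seq_S, map_app, fold_right_app. simpl.
  induction (map F (seq 0 m)) as [|h t IH]; simpl; [ring | rewrite IH; ring].
Qed.

Lemma sumk_ext m F G : (forall j, (j < m)%nat -> F j = G j) -> sumk m F = sumk m G.
Proof. induction m as [|m IH]; intros h; [reflexivity|]. rewrite !sumk_S, IH, h; auto. Qed.

Lemma sumk_const m F a : (forall j, (j < m)%nat -> F j = a) -> sumk m F = INR m * a.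
Proof.
  induction m as [|m IH]; intros h; [unfold sumk; simpl; ring|].
  rewrite sumk_S, IH, h, S_INR by auto. ring.
Qed.

Lemma sumk_lin m F G a b :
  sumk m (fun j => a * F j + b * G j) = a * sumk m F + b * sumk m G.
Proof. induction m as [|m IH]; [unfold sumk; simpl; ring|]. rewrite !sumk_S, IH. ring. Qed.

Lemma sumk_nonneg m F : (forall j, (j < m)%nat -> 0 <= F j) -> 0 <= sumk m F.
Proof.
  induction m as [|m IH]; intros h; [unfold sumk; simpl; lra|].
  rewrite sumk_S. pose proof (h m (Nat.lt_succ_diag_r m)). pose proof (IH ltac:(auto)). lra.
Qed.

Lemma sumk_eq0_nonneg m F : (forall j, (j < m)%nat -> 0 <= F j) -> sumk m F = 0 ->
  forall j, (j < m)%nat -> F j = 0.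
Proof.
  induction m as [|m IH]; intros h e j hj; [lia|].
  rewrite sumk_S in e. pose proof (h m (Nat.lt_succ_diag_r m)).
  pose proof (sumk_nonneg m F ltac:(auto)).
  destruct (Nat.eq_dec j m) as [->|]; [lra|]. apply IH; auto; lra || lia.
Qed.

Lemma edge_ode_is_derive lam u : edge_ode lam u -> forall x, is_derive u x (Derive u x).
Proof. intros H x. apply Derive_correct, H. Qed.

Lemma edge_ode_is_derive2 lam u :
  edge_ode lam u -> forall x, is_derive (Derive u) x (- lam * u x).
Proof.
  intros H x. destruct (H x) as [_ [hd e]].
  replace (- lam * u x) with (Derive (Derive u) x) by lra. apply Derive_correct, hd.
Qed.

Lemma edge_ode_intro lam u du : (forall x, is_derive u x (du x)) ->
  (forall x, is_derive du x (- lam * u x)) -> edge_ode lam u.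
Proof.
  intros h1 h2 x.
  assert (e : forall t, Derive u t = du t) by (intro t; apply is_derive_unique, h1).
  split; [eexists; apply h1|split].
  - apply ex_derive_ext with du; [intro t; symmetry; apply e | eexists; apply h2].
  - rewrite (Derive_ext _ _ x e), (is_derive_unique _ _ _ (h2 x)). ring.
Qed.

Lemma edge_ode_ext lam u v : (forall x, u x = v x) -> edge_ode lam u -> edge_ode lam v.
Proof.
  intros e H. apply edge_ode_intro with (Derive u).
  - intro x. apply is_derive_ext with u; [apply e | apply (edge_ode_is_derive _ _ H)].
  - intro x. rewrite <- e. apply (edge_ode_is_derive2 _ _ H).
Qed.

Lemma edge_ode_minus lam u v : edge_ode lam u -> edge_ode lam v ->
  edge_ode lam (fun x => u x - v x).
Proof.
  intros Hu Hv. apply edge_ode_intro with (fun x => Derive u x - Derive v x); intro x.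
  - apply (is_derive_minus u v); [apply (edge_ode_is_derive lam) | apply (edge_ode_is_derive lam)];
      assumption.
  - replace (- lam * (u x - v x)) with (- lam * u x - - lam * v x) by ring.
    apply (is_derive_minus (Derive u) (Derive v)); apply edge_ode_is_derive2; assumption.
Qed.

Lemma edge_ode_harmonic k a b x0 :
  edge_ode (k * k) (fun x => a * cos (k * (x - x0)) + b * sin (k * (x - x0))).
Proof.
  apply edge_ode_intro with
    (fun x => k * (- a * sin (k * (x - x0)) + b * cos (k * (x - x0)))); intro x;
    auto_derive; auto; unfold Rminus; ring.
Qed.

Lemma is_derive_0_const (E : R -> R) : (forall t, is_derive E t 0) -> forall a b, E a = E b.
Proof.
  intros h a b. destruct (Rtotal_order a b) as [l|[->|l]]; [| reflexivity |].
  - apply (eq_is_derive E a b); auto.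
  - symmetry; apply (eq_is_derive E b a); auto.
Qed.

(* The energy w'^2 + lam w^2 is conserved. *)
Lemma edge_ode_cauchy_zero lam w x0 : 0 < lam -> edge_ode lam w ->
  w x0 = 0 -> Derive w x0 = 0 -> forall x, w x = 0.
Proof.
  intros hl H h0 h1 x.
  set (E := fun t => Derive w t * Derive w t + lam * (w t * w t)).
  assert (DE : forall t, is_derive E t 0).
  { intro t. pose proof (edge_ode_is_derive _ _ H t) as d1.
    pose proof (edge_ode_is_derive2 _ _ H t) as d2.
    pose proof (is_derive_plus _ _ t _ _ (is_derive_mult _ _ t _ _ d2 d2 Rmult_comm)
      (is_derive_scal _ t lam _ (is_derive_mult _ _ t _ _ d1 d1 Rmult_comm))) as D.
    cbv [plus mult] in D; simpl in D.
    replace 0 with (- lam * w t * Derive w t + Derive w t * (- lam * w t)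
                    + lam * (Derive w t * w t + w t * Derive w t)) by ring.
    exact D. }
  assert (E0 : E x = 0) by (rewrite (is_derive_0_const E DE x x0); unfold E; rewrite h0, h1; ring).
  unfold E in E0.
  assert (hw : lam * (w x * w x) = 0) by (pose proof (Rle_0_sqr (Derive w x));
    pose proof (Rle_0_sqr (w x)); unfold Rsqr in *; nra).
  destruct (Rmult_integral _ _ hw) as [|hw']; [lra|].
  destruct (Rmult_integral _ _ hw'); assumption.
Qed.

Lemma edge_ode_sol k u x0 x : 0 < k -> edge_ode (k * k) u ->
  u x = u x0 * cos (k * (x - x0)) + Derive u x0 / k * sin (k * (x - x0)).
Proof.
  intros hk H.
  set (h := fun x => u x0 * cos (k * (x - x0)) + Derive u x0 / k * sin (k * (x - x0))).
  assert (Dh : Derive h x0 = Derive u x0).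
  { apply is_derive_unique. unfold h. auto_derive; auto.
    replace (x0 + - x0) with 0 by ring. rewrite Rmult_0_r, sin_0, cos_0. field. lra. }
  assert (W := edge_ode_cauchy_zero (k * k) (fun x => u x - h x) x0 ltac:(nra)
    (edge_ode_minus _ _ _ H (edge_ode_harmonic _ _ _ _))).
  enough (u x - h x = 0) by (unfold h in *; lra).
  apply W.
  - unfold h. replace (x0 - x0) with 0 by ring. rewrite Rmult_0_r, sin_0, cos_0. ring.
  - rewrite Derive_minus, Dh; [ring | apply H | ].
    unfold h. auto_derive. auto.
Qed.

Lemma edge_ode_continuous lam u : edge_ode lam u -> forall x, continuity_pt u x.
Proof.
  intros H x. apply continuity_pt_filterlim, (ex_derive_continuous (V := R_NormedModule)), H.
Qed.

Lemma edge_ode_is_derive_flux lam u : edge_ode lam u -> forall t,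
  is_derive (fun t => u t * Derive u t) t (Derive u t * Derive u t - lam * (u t * u t)).
Proof.
  intros H t.
  pose proof (is_derive_mult _ _ t _ _ (edge_ode_is_derive _ _ H t)
    (edge_ode_is_derive2 _ _ H t) Rmult_comm) as D.
  cbv [plus mult] in D; simpl in D.
  replace (Derive u t * Derive u t - lam * (u t * u t))
    with (Derive u t * Derive u t + u t * (- lam * u t)) by ring.
  exact D.
Qed.

(* For [lam <= 0] the flux [u u'] has derivative [u'^2 - lam u^2 >= 0]. *)
Lemma edge_ode_flux_le lam u x y : lam <= 0 -> edge_ode lam u -> x <= y ->
  u x * Derive u x <= u y * Derive u y.
Proof.
  intros hl H hxy.
  destruct (MVT_gen (fun t => u t * Derive u t) x y
    (fun t => Derive u t * Derive u t - lam * (u t * u t))) as [c [_ e]].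
  - intros t _. apply (edge_ode_is_derive_flux _ _ H).
  - intros t _. apply continuity_pt_filterlim.
    exact (ex_derive_continuous (V := R_NormedModule) (fun t => u t * Derive u t) t
      (ex_intro _ _ (edge_ode_is_derive_flux _ _ H t))).
  - assert (0 <= Derive u c * Derive u c - lam * (u c * u c)) by nra. nra.
Qed.

Lemma edge_ode_flux_eq_const lam u a b : lam <= 0 -> edge_ode lam u -> a < b ->
  u a * Derive u a = u b * Derive u b -> forall y, a <= y <= b -> u y = u a.
Proof.
  intros hl H hab e.
  set (phi := fun t => u t * Derive u t).
  assert (C : forall y, a <= y <= b -> phi y = phi a).
  { intros y hy. pose proof (edge_ode_flux_le lam u a y hl H (proj1 hy)).
    pose proof (edge_ode_flux_le lam u y b hl H (proj2 hy)). unfold phi in *. lra. }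
  assert (Z : forall x, a < x < b -> Derive u x = 0).
  { intros x hx.
    assert (D0 : is_derive phi x 0).
    { apply is_derive_ext_loc with (fun _ => phi a);
        [|apply (is_derive_const (V := R_NormedModule))].
      assert (hd : 0 < Rmin (x - a) (b - x)) by (apply Rmin_pos; lra).
      exists (mkposreal _ hd). intros t ht. cbn in ht.
      change (Rabs (t - x) < Rmin (x - a) (b - x)) in ht. apply Rabs_def2 in ht.
      pose proof (Rmin_l (x - a) (b - x)). pose proof (Rmin_r (x - a) (b - x)).
      symmetry; apply C; lra. }
    assert (Derive u x * Derive u x - lam * (u x * u x) = 0).
    { rewrite <- (is_derive_unique _ _ _ D0). symmetry.
      apply is_derive_unique. exact (edge_ode_is_derive_flux _ _ H x). }
    nra. }
  intros y hy. destruct (Req_dec y a) as [->|hya]; [reflexivity|].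
  destruct (MVT_gen u a y (fun _ => 0)) as [c [_ e2]].
  - intros t ht. rewrite Rmin_left in ht by lra. rewrite Rmax_right in ht by lra.
    rewrite <- (Z t) by lra. apply (edge_ode_is_derive _ _ H).
  - intros t _. apply (edge_ode_continuous _ _ H).
  - lra.
Qed.

(* Green's formula: the flux increments along the edges sum to the Kirchhoff sums, which vanish;
   as each increment is nonnegative, all vanish and every edge function is constant. *)
Lemma eigfun_nonpos_zero m eps lam g : 0 < eps -> lam <= 0 ->
  is_eigfun m eps lam g -> geq m eps g gzero.
Proof.
  intros he hl [o1 [o2 [os [b1 [b2 [c2 [c3 [k2 k3]]]]]]]].
  set (a := ge1 g (1/2)) in *. set (b := ge2 g 0) in *.
  set (F := fun j => b * Derive (gs g j) eps + - a * Derive (gs g j) 0).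
  assert (J1 : 0 <= a * Derive (ge1 g) (1/2)).
  { pose proof (edge_ode_flux_le lam _ 0 (1/2) hl o1 ltac:(lra)).
    rewrite b1 in H. fold a in H. lra. }
  assert (J2 : b * Derive (ge2 g) 0 <= 0).
  { pose proof (edge_ode_flux_le lam _ 0 (1/2) hl o2 ltac:(lra)).
    rewrite b2 in H. fold b in H. lra. }
  assert (Js : forall j, (j < m)%nat -> 0 <= F j).
  { intros j hj. pose proof (edge_ode_flux_le lam _ 0 eps hl (os j hj) ltac:(lra)).
    unfold F. rewrite c2, c3 in H by exact hj. lra. }
  assert (Fsum : sumk m F = b * Derive (ge2 g) 0 - a * Derive (ge1 g) (1/2)).
  { unfold F. rewrite sumk_lin.
    replace (sumk m (fun j => Derive (gs g j) eps)) with (Derive (ge2 g) 0) by lra.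
    replace (sumk m (fun j => Derive (gs g j) 0)) with (Derive (ge1 g) (1/2)) by lra. ring. }
  pose proof (sumk_nonneg m F Js).
  assert (flat1 : forall x, 0 <= x <= 1/2 -> ge1 g x = 0).
  { intros x hx. rewrite <- b1. apply (edge_ode_flux_eq_const lam _ 0 (1/2)); auto; [lra|].
    rewrite b1. fold a. lra. }
  assert (flat2 : forall x, 0 <= x <= 1/2 -> ge2 g x = 0).
  { assert (hc : forall x, 0 <= x <= 1/2 -> ge2 g x = b).
    { intros x hx. apply (edge_ode_flux_eq_const lam _ 0 (1/2)); auto; [lra|].
      rewrite b2. fold b. lra. }
    intros x hx. rewrite hc by lra. rewrite <- (hc (1/2)) by lra. exact b2. }
  assert (a0 : a = 0) by (apply flat1; lra).
  split; [|split]; cbn.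
  - exact flat1.
  - exact flat2.
  - intros j hj x hx.
    rewrite (edge_ode_flux_eq_const lam _ 0 eps hl (os j hj) he); [now rewrite c2 | | exact hx].
    pose proof (sumk_eq0_nonneg m F Js ltac:(lra) j hj) as Fj. unfold F in Fj.
    rewrite c2, c3, a0 by exact hj. rewrite a0 in Fj. lra.
Qed.

(* Unlike [geq], agreement on the whole line, so that derivatives at the vertices agree too. *)
Definition gext (m : nat) (f g : gfun) : Prop :=
  (forall x, ge1 f x = ge1 g x) /\ (forall x, ge2 f x = ge2 g x) /\
  (forall k, (k < m)%nat -> forall x, gs f k x = gs g k x).

Lemma gext_trans m f g h : gext m f g -> gext m g h -> gext m f h.
Proof.
  intros [e1 [e2 es]] [e1' [e2' es']].
  split; [|split]; intros; [rewrite e1 | rewrite e2 | rewrite es]; auto.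
Qed.

Lemma gext_geq m eps f g : gext m f g -> geq m eps f g.
Proof. intros [e1 [e2 es]]. split; [|split]; intros; auto. Qed.

Lemma is_eigfun_gext m eps lam f g : gext m f g -> is_eigfun m eps lam f -> is_eigfun m eps lam g.
Proof.
  intros [e1 [e2 es]] [o1 [o2 [os [b1 [b2 [c2 [c3 [k2 k3]]]]]]]].
  assert (Es : forall x, sumk m (fun k => Derive (gs f k) x) = sumk m (fun k => Derive (gs g k) x)).
  { intro x. apply sumk_ext. intros j hj. apply Derive_ext, es, hj. }
  split; [|split; [|split; [|split; [|split; [|split; [|split; [|split]]]]]]].
  - apply edge_ode_ext with (ge1 f); auto.
  - apply edge_ode_ext with (ge2 f); auto.
  - intros j hj. apply edge_ode_ext with (gs f j); auto.
  - rewrite <- e1. exact b1.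
  - rewrite <- e2. exact b2.
  - intros j hj. rewrite <- e1, <- es by exact hj. auto.
  - intros j hj. rewrite <- e2, <- es by exact hj. auto.
  - rewrite <- Es, <- (Derive_ext _ _ _ e1). exact k2.
  - rewrite <- Es, <- (Derive_ext _ _ _ e2). exact k3.
Qed.

Lemma cos_sub_PI x : cos x = - cos (x - PI).
Proof. rewrite cos_minus, cos_PI, sin_PI. ring. Qed.

Lemma sin_sub_PI x : sin x = - sin (x - PI).
Proof. rewrite sin_minus, cos_PI, sin_PI. ring. Qed.

Lemma cos_sub_PI2 x : cos x = - sin (x - PI/2).
Proof. rewrite sin_minus, cos_PI2, sin_PI2. ring. Qed.

Lemma sin_sub_PI2 x : sin x = cos (x - PI/2).
Proof. rewrite cos_minus, cos_PI2, sin_PI2. ring. Qed.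

Lemma sin_cos_sqr x : sin x * sin x + cos x * cos x = 1.
Proof. pose proof (sin2_cos2 x). unfold Rsqr in *. lra. Qed.

Lemma sin_cos_ge0 x : 0 <= x <= PI/2 -> 0 <= sin x /\ 0 <= cos x.
Proof. intros h. pose proof PI_RGT_0. split; [apply sin_ge_0 | apply cos_ge_0]; lra. Qed.

Lemma sin_cos_gt0 x : 0 < x < PI/2 -> 0 < sin x /\ 0 < cos x.
Proof. intros h. pose proof PI_RGT_0. split; [apply sin_gt_0 | apply cos_gt_0]; lra. Qed.

Lemma sin_cos_strict_mono a b : 0 <= a < b -> b <= PI/2 -> sin a < sin b /\ cos b < cos a.
Proof.
  intros h1 h2. pose proof PI_RGT_0.
  split; [apply sin_increasing_1 | apply cos_decreasing_1]; lra.
Qed.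

Lemma sin_cos_comb_pos s c x y : 0 <= s -> 0 <= c -> s * s + c * c = 1 ->
  0 < x -> 0 < y -> 0 < s * x + c * y.
Proof.
  intros hs hc e hx hy. destruct (Req_dec s 0) as [->|].
  - assert (0 < c) by nra. nra.
  - assert (0 < s * x) by (apply Rmult_lt_0_compat; lra). assert (0 <= c * y) by nra. lra.
Qed.

Lemma IVT_open (f : R -> R) a b : continuity f -> a < b -> f a * f b < 0 ->
  exists t, a < t < b /\ f t = 0.
Proof.
  intros hc hab hs. destruct (IVT_cor f a b hc ltac:(lra) ltac:(lra)) as [t [ht e]].
  exists t. split; [|exact e].
  split; apply Rnot_le_lt; intro; [replace t with a in e by lra | replace t with b in e by lra];
    rewrite e in hs; lra.
Qed.

Lemma strict_mono_inj (f : R -> R) (P : R -> Prop) :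
  (forall a b, P a -> P b -> a < b -> f a < f b) ->
  forall a b, P a -> P b -> f a = f b -> a = b.
Proof.
  intros hf a b ha hb e. destruct (Rtotal_order a b) as [l|[q|l]]; auto.
  - pose proof (hf a b ha hb l). lra.
  - pose proof (hf b a hb ha l). lra.
Qed.

Lemma sin_eq_0_small y : - PI < y < PI -> sin y = 0 -> y = 0.
Proof.
  intros h e. destruct (Rtotal_order y 0) as [l|[q|l]]; auto.
  - pose proof (sin_gt_0 (- y) ltac:(lra) ltac:(lra)). rewrite sin_neg in H. lra.
  - pose proof (sin_gt_0 y ltac:(lra) ltac:(lra)). lra.
Qed.

Lemma sin_eq_0_lt_2PI y : 0 < y < 2 * PI -> sin y = 0 -> y = PI.
Proof. intros h e. destruct (sin_eq_O_2PI_0 y) as [|[|]]; auto; lra. Qed.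

Definition even_secular m eps th := cos th * cos (eps * th) - INR m * sin th * sin (eps * th).
Definition odd_secular m eps th := cos th * sin (eps * th) + INR m * sin th * cos (eps * th).

(* [A sin] on e1 and [D sin] on e2, continued on each small edge by the solution of phase
   [2 eps th] taking the end values [A sin th] and [D sin th]. *)
Definition gtrig eps th A D : gfun :=
  mkGfun (fun x => A * sin (2 * th * x)) (fun x => D * sin (2 * th * (1/2 - x)))
    (fun _ x => (A + D) * sin th / (2 * cos (eps * th)) * cos (2 * th * (x - eps/2))
              + (D - A) * sin th / (2 * sin (eps * th)) * sin (2 * th * (x - eps/2))).

Section Trig.
Variables (m : nat) (eps th : R).
Hypothesis hth : 0 < th.
Hypothesis hphase : 0 < eps * th < PI/2.

Let E := even_secular m eps th.
Let O := odd_secular m eps th.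

Lemma gtrig_kirchhoff A D : let f := gtrig eps th A D in
  - Derive (ge1 f) (1/2) + sumk m (fun k => Derive (gs f k) 0)
    = - th / (cos (eps * th) * sin (eps * th)) *
        (sin (eps * th) * ((A + D) * E) + cos (eps * th) * ((A - D) * O)) /\
  Derive (ge2 f) 0 - sumk m (fun k => Derive (gs f k) eps)
    = - th / (cos (eps * th) * sin (eps * th)) *
        (sin (eps * th) * ((A + D) * E) - cos (eps * th) * ((A - D) * O)).
Proof.
  destruct (sin_cos_gt0 _ hphase) as [hs hc].
  set (P := (A + D) * sin th / (2 * cos (eps * th))).
  set (Q := (D - A) * sin th / (2 * sin (eps * th))).
  assert (d1 : Derive (fun x => A * sin (2 * th * x)) (1/2) = 2 * th * A * cos th).
  { apply is_derive_unique. auto_derive; auto. replace (2 * th * (1/2)) with th by field. ring. }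
  assert (d2 : Derive (fun x => D * sin (2 * th * (1/2 - x))) 0 = - 2 * th * D * cos th).
  { apply is_derive_unique. auto_derive; auto.
    replace (2 * th * (1/2 + - 0)) with th by field. ring. }
  assert (ds : forall y,
    Derive (fun x => P * cos (2 * th * (x - eps/2)) + Q * sin (2 * th * (x - eps/2))) y
    = 2 * th * (- P * sin (2 * th * (y - eps/2)) + Q * cos (2 * th * (y - eps/2)))).
  { intro y. apply is_derive_unique. auto_derive; auto. unfold Rminus. ring. }
  cbn. fold P Q. rewrite d1, d2, !(sumk_const _ _ _ (fun j _ => ds _)).
  replace (2 * th * (0 - eps/2)) with (- (eps * th)) by field.
  replace (2 * th * (eps - eps/2)) with (eps * th) by field.
  rewrite cos_neg, sin_neg. unfold P, Q, E, O, even_secular, odd_secular.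
  split; field; lra.
Qed.

Lemma is_eigfun_gtrig A D :
  is_eigfun m eps ((2 * th) * (2 * th)) (gtrig eps th A D) <-> (A + D) * E = 0 /\ (A - D) * O = 0.
Proof.
  destruct (sin_cos_gt0 _ hphase) as [hs hc].
  assert (hk : - th / (cos (eps * th) * sin (eps * th)) <> 0).
  { apply Rmult_integral_contrapositive. split; [lra|].
    apply Rinv_neq_0_compat. nra. }
  destruct (gtrig_kirchhoff A D) as [K2 K3]. cbn zeta in K2, K3.
  split.
  - intros [_ [_ [_ [_ [_ [_ [_ [k2 k3]]]]]]]].
    rewrite K2 in k2. rewrite K3 in k3.
    apply Rmult_integral in k2 as [|k2]; [contradiction|].
    apply Rmult_integral in k3 as [|k3]; [contradiction|].
    split;
      [apply Rmult_eq_reg_l with (sin (eps * th)) | apply Rmult_eq_reg_l with (cos (eps * th))];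
      lra.
  - intros [hE hO].
    split; [|split; [|split; [|split; [|split; [|split; [|split; [|split]]]]]]];
      [cbn .. | rewrite K2, hE, hO; ring | rewrite K3, hE, hO; ring].
    + apply edge_ode_intro with (fun x => A * (2 * th) * cos (2 * th * x));
        intro x; auto_derive; auto; ring.
    + apply edge_ode_intro with (fun x => - D * (2 * th) * cos (2 * th * (1/2 - x)));
        intro x; auto_derive; auto; unfold Rminus; ring.
    + intros j _. apply edge_ode_intro with (fun x => 2 * th *
        (- ((A + D) * sin th / (2 * cos (eps * th))) * sin (2 * th * (x - eps/2))
         + (D - A) * sin th / (2 * sin (eps * th)) * cos (2 * th * (x - eps/2))));
        intro x; auto_derive; auto; unfold Rminus; ring.
    + rewrite Rmult_0_r, sin_0. ring.
    + replace (2 * th * (1/2 - 1/2)) with 0 by ring. rewrite sin_0. ring.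
    + intros j _. replace (2 * th * (0 - eps/2)) with (- (eps * th)) by field.
      replace (2 * th * (1/2)) with th by field. rewrite cos_neg, sin_neg. field. lra.
    + intros j _. replace (2 * th * (eps - eps/2)) with (eps * th) by field.
      replace (2 * th * (1/2 - 0)) with th by field. field. lra.
Qed.

Lemma eigfun_gtrig g : is_eigfun m eps ((2 * th) * (2 * th)) g ->
  exists A D, gext m g (gtrig eps th A D).
Proof.
  intros [o1 [o2 [os [b1 [b2 [c2 [c3 _]]]]]]].
  destruct (sin_cos_gt0 _ hphase) as [hs hc].
  assert (hk : 0 < 2 * th) by lra.
  set (A := Derive (ge1 g) 0 / (2 * th)). set (D := - Derive (ge2 g) (1/2) / (2 * th)).
  exists A, D.
  split; [|split]; cbn.
  - intro x. rewrite (edge_ode_sol _ _ 0 x hk o1), b1, Rminus_0_r. unfold A. ring.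
  - intro x. rewrite (edge_ode_sol _ _ (1/2) x hk o2), b2.
    replace (2 * th * (x - 1/2)) with (- (2 * th * (1/2 - x))) by ring.
    rewrite sin_neg. unfold D. field. lra.
  - intros j hj x. rewrite (edge_ode_sol _ _ (eps/2) x hk (os j hj)).
    pose proof (c2 j hj) as e0. pose proof (c3 j hj) as e1.
    rewrite (edge_ode_sol _ _ (eps/2) 0 hk (os j hj)), (edge_ode_sol _ _ 0 (1/2) hk o1), b1 in e0.
    rewrite (edge_ode_sol _ _ (eps/2) eps hk (os j hj)), (edge_ode_sol _ _ (1/2) 0 hk o2), b2 in e1.
    replace (2 * th * (0 - eps/2)) with (- (eps * th)) in e0 by field.
    replace (2 * th * (eps - eps/2)) with (eps * th) in e1 by field.
    replace (2 * th * (1/2 - 0)) with th in e0 by field.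
    replace (2 * th * (0 - 1/2)) with (- th) in e1 by field.
    rewrite cos_neg, sin_neg in e0, e1. fold A in e0.
    set (p := gs g j (eps/2)) in *. set (q := Derive (gs g j) (eps/2) / (2 * th)) in *.
    assert (hD : Derive (ge2 g) (1/2) / (2 * th) = - D) by (unfold D; field; lra).
    rewrite hD in e1.
    assert (hp : p = (A + D) * sin th / (2 * cos (eps * th))) by (field_simplify_eq; nra || lra).
    assert (hq : q = (D - A) * sin th / (2 * sin (eps * th))) by (field_simplify_eq; nra || lra).
    rewrite hp, hq. reflexivity.
Qed.

Lemma gtrig_scale c A D : gext m (gtrig eps th (c * A) (c * D)) (gscale c (gtrig eps th A D)).
Proof. split; [|split]; intros; cbn; unfold Rdiv; ring. Qed.

Lemma psi_comp_gtrig A D : gext m (psi_comp eps (gtrig eps th A D)) (gtrig eps th D A).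
Proof.
  split; [|split]; intros; cbn.
  - replace (1/2 - (1/2 - x)) with x by ring. reflexivity.
  - reflexivity.
  - replace (2 * th * (eps - x - eps/2)) with (- (2 * th * (x - eps/2))) by field.
    rewrite cos_neg, sin_neg. unfold Rdiv. ring.
Qed.

Lemma psi_comp_gtrig_odd :
  gext m (psi_comp eps (gtrig eps th 1 (-1))) (gopp (gtrig eps th 1 (-1))).
Proof.
  apply (gext_trans _ _ _ _ (psi_comp_gtrig 1 (-1))).
  replace (gtrig eps th (-1) 1) with (gtrig eps th (-1 * 1) (-1 * -1)) by (f_equal; ring).
  apply gtrig_scale.
Qed.

Lemma simple_eig_gtrig s : sin th <> 0 -> (1 + s) * E = 0 -> (1 - s) * O = 0 ->
  (forall A D, (A + D) * E = 0 -> (A - D) * O = 0 -> D = s * A) ->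
  simple_eig m eps ((2 * th) * (2 * th)) (gtrig eps th 1 s).
Proof.
  intros hs hE hO hAD. split; [|split].
  - apply is_eigfun_gtrig. auto.
  - intros [h1 _]. specialize (h1 (1/2) ltac:(lra)). cbn in h1.
    replace (2 * th * (1/2)) with th in h1 by field. lra.
  - intros g hg. destruct (eigfun_gtrig g hg) as [A [D hgD]].
    destruct (proj1 (is_eigfun_gtrig A D) (is_eigfun_gext _ _ _ _ _ hgD hg)) as [e1 e2].
    exists A. apply gext_geq.
    replace D with (A * s) in hgD by (rewrite (hAD A D e1 e2); ring).
    rewrite <- (Rmult_1_r A) in hgD at 1.
    exact (gext_trans _ _ _ _ hgD (gtrig_scale A 1 s)).
Qed.

End Trig.

Section Secular.
Variables (m : nat) (eps : R).
Hypothesis hm : 0 < INR m.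
Hypothesis he : 0 < eps < 1/3.

Let E := even_secular m eps.
Let O := odd_secular m eps.

Lemma phase_bounds th : 0 < th <= 3*PI/2 -> 0 < eps * th < PI/2.
Proof. intros h. pose proof PI_RGT_0. split; nra. Qed.

Lemma sin_cos_phase_gt0 th : 0 < th <= 3*PI/2 -> 0 < sin (eps * th) /\ 0 < cos (eps * th).
Proof. intros h. apply sin_cos_gt0, phase_bounds, h. Qed.

Lemma phase_products_mono pa pb a b : 0 <= pa < pb -> pb <= PI/2 -> 0 < a < b -> b <= 3*PI/2 ->
  sin pa * sin (eps * a) < sin pb * sin (eps * b) /\
  cos pb * cos (eps * b) < cos pa * cos (eps * a).
Proof.
  intros h1 h2 h3 h4.
  destruct (sin_cos_strict_mono pa pb h1 h2) as [s1 c1].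
  destruct (sin_cos_strict_mono (eps * a) (eps * b) ltac:(nra)
    ltac:(pose proof (phase_bounds b); lra))
    as [s2 c2].
  destruct (sin_cos_ge0 pa ltac:(lra)) as [spa cpa].
  destruct (sin_cos_ge0 pb ltac:(lra)) as [spb cpb].
  destruct (sin_cos_phase_gt0 a ltac:(lra)) as [sa ca].
  destruct (sin_cos_phase_gt0 b ltac:(lra)) as [sb cb].
  split; apply Rmult_le_0_lt_compat; lra.
Qed.

Lemma even_secular_decreasing a b : 0 < a < b -> b <= PI/2 -> E b < E a.
Proof.
  intros h1 h2. destruct (phase_products_mono a b a b ltac:(lra) h2 h1 ltac:(lra)) as [hs hc].
  unfold E, even_secular. nra.
Qed.

Lemma even_secular_neg th : PI/2 <= th <= PI -> E th < 0.
Proof.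
  intros h. pose proof PI_RGT_0. destruct (sin_cos_phase_gt0 th ltac:(lra)) as [s c].
  pose proof (sin_cos_comb_pos (sin th) (- cos th) (INR m * sin (eps * th)) (cos (eps * th))
    ltac:(apply sin_ge_0; lra) ltac:(pose proof (cos_le_0 th); lra)
    ltac:(rewrite <- (sin_cos_sqr th); ring) ltac:(nra) c).
  unfold E, even_secular. nra.
Qed.

Lemma even_secular_increasing a b : PI <= a < b -> b <= 3*PI/2 -> E a < E b.
Proof.
  intros h1 h2. pose proof PI_RGT_0.
  destruct (phase_products_mono (a - PI) (b - PI) a b ltac:(lra) ltac:(lra) ltac:(lra) h2)
    as [hs hc].
  unfold E, even_secular. rewrite (cos_sub_PI a), (sin_sub_PI a), (cos_sub_PI b), (sin_sub_PI b).
  nra.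
Qed.

Lemma odd_secular_pos th : 0 < th <= PI/2 -> 0 < O th.
Proof.
  intros h. pose proof PI_RGT_0. destruct (sin_cos_phase_gt0 th ltac:(lra)) as [s c].
  destruct (sin_cos_ge0 th ltac:(lra)) as [sth cth].
  pose proof (sin_cos_comb_pos (sin th) (cos th) (INR m * cos (eps * th)) (sin (eps * th))
    sth cth (sin_cos_sqr th) ltac:(nra) s).
  unfold O, odd_secular. nra.
Qed.

Lemma odd_secular_decreasing a b : PI/2 <= a < b -> b <= PI -> O b < O a.
Proof.
  intros h1 h2. pose proof PI_RGT_0.
  destruct (phase_products_mono (a - PI/2) (b - PI/2) a b ltac:(lra) ltac:(lra) ltac:(lra)
    ltac:(lra)) as [hs hc].
  unfold O, odd_secular. rewrite (cos_sub_PI2 a), (sin_sub_PI2 a), (cos_sub_PI2 b), (sin_sub_PI2 b).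
  nra.
Qed.

Lemma odd_secular_neg th : PI <= th <= 3*PI/2 -> O th < 0.
Proof.
  intros h. pose proof PI_RGT_0. destruct (sin_cos_phase_gt0 th ltac:(lra)) as [s c].
  pose proof (sin_cos_comb_pos (- sin th) (- cos th) (INR m * cos (eps * th)) (sin (eps * th))
    ltac:(pose proof (sin_le_0 th); lra) ltac:(pose proof (cos_le_0 th); lra)
    ltac:(rewrite <- (sin_cos_sqr th); ring) ltac:(nra) s).
  unfold O, odd_secular. nra.
Qed.

Lemma even_secular_roots : exists t1 t3, 0 < t1 < PI/2 /\ PI < t3 < 3*PI/2 /\
  forall t, 0 < t <= 3*PI/2 -> (E t = 0 <-> t = t1 \/ t = t3).
Proof.
  pose proof PI_RGT_0.
  assert (hc : continuity E) by (unfold E, even_secular; reg).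
  destruct (IVT_open E 0 (PI/2) hc ltac:(lra)) as [t1 [h1 e1]].
  { pose proof (even_secular_neg (PI/2) ltac:(lra)).
    assert (E 0 = 1) by (unfold E, even_secular; rewrite Rmult_0_r, cos_0, sin_0; ring).
    nra. }
  destruct (IVT_open E PI (3*PI/2) hc ltac:(lra)) as [t3 [h3 e3]].
  { pose proof (even_secular_neg PI ltac:(lra)).
    destruct (sin_cos_phase_gt0 (3*PI/2) ltac:(lra)) as [s _].
    assert (0 < E (3*PI/2)).
    { unfold E, even_secular. replace (3*PI/2) with (3*(PI/2)) in * by field.
      rewrite cos_3PI2, sin_3PI2. nra. }
    nra. }
  exists t1, t3. split; [exact h1|split; [exact h3|]].
  intros t ht. split; [intro e | intros [-> | ->]; assumption].
  destruct (Rle_lt_dec t (PI/2)); [|destruct (Rle_lt_dec t PI)].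
  - left. apply (strict_mono_inj (fun t => - E t) (fun t => 0 < t <= PI/2)); try lra.
    intros a b ha hb hab. pose proof (even_secular_decreasing a b ltac:(lra) ltac:(lra)). lra.
  - pose proof (even_secular_neg t ltac:(lra)). lra.
  - right. apply (strict_mono_inj E (fun t => PI <= t <= 3*PI/2)); try lra.
    intros a b ha hb hab. apply even_secular_increasing; lra.
Qed.

Lemma odd_secular_root : exists t2, PI/2 < t2 < PI /\
  forall t, 0 < t <= 3*PI/2 -> (O t = 0 <-> t = t2).
Proof.
  pose proof PI_RGT_0.
  assert (hc : continuity O) by (unfold O, odd_secular; reg).
  destruct (IVT_open O (PI/2) PI hc ltac:(lra)) as [t2 [h2 e2]].
  { pose proof (odd_secular_pos (PI/2) ltac:(lra)). pose proof (odd_secular_neg PI ltac:(lra)).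
    nra. }
  exists t2. split; [exact h2|].
  intros t ht. split; [intro e | intros ->; assumption].
  destruct (Rle_lt_dec t (PI/2)); [|destruct (Rle_lt_dec t PI)].
  - pose proof (odd_secular_pos t ltac:(lra)). lra.
  - apply (strict_mono_inj (fun t => - O t) (fun t => PI/2 <= t <= PI)); try lra.
    intros a b ha hb hab. pose proof (odd_secular_decreasing a b ltac:(lra) ltac:(lra)). lra.
  - pose proof (odd_secular_neg t ltac:(lra)). lra.
Qed.

End Secular.

Lemma num_zeros_gtrig_odd m eps th : 0 < th < PI -> 0 < eps * th < PI/2 ->
  num_zeros m eps (gtrig eps th 1 (-1)) m.
Proof.
  intros hth hph. destruct (sin_cos_gt0 _ hph) as [se ce].
  assert (sth : 0 < sin th) by (apply sin_gt_0; lra).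
  exists (map (fun j => PS j (eps/2)) (seq 0 m)). split; [|split].
  - apply NoDup_map_NoDup_ForallPairs; [|apply seq_NoDup].
    intros a b _ _ e. injection e. auto.
  - rewrite length_map, length_seq. reflexivity.
  - assert (Es : forall j x, gs (gtrig eps th 1 (-1)) j x
                 = - (sin th / sin (eps * th)) * sin (2 * th * (x - eps/2))).
    { intros j x. cbn. field. lra. }
    intros p. rewrite in_map_iff. split.
    + intros [j [<- hj]]. apply in_seq in hj. cbn [valid_pt geval]. rewrite Es.
      replace (eps/2 - eps/2) with 0 by ring. rewrite Rmult_0_r, sin_0.
      assert (0 < eps) by nra. split; [split; [lia | lra] | ring].
    + destruct p as [x|x|j x]; cbn [valid_pt geval]; intros [hv e].
      * exfalso. cbn in e. assert (0 < sin (2 * th * x)) by (apply sin_gt_0; nra). lra.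
      * exfalso. cbn in e. assert (0 < sin (2 * th * (1/2 - x))) by (apply sin_gt_0; nra). lra.
      * destruct hv as [hj hx]. rewrite Es in e.
        assert (hc : - (sin th / sin (eps * th)) <> 0).
        { apply Ropp_neq_0_compat, Rgt_not_eq, Rdiv_lt_0_compat; lra. }
        apply Rmult_integral in e as [|e]; [contradiction|].
        apply sin_eq_0_small in e; [|split; nra].
        exists j. split; [f_equal; nra | apply in_seq; lia].
Qed.

Lemma num_zeros_gtrig_even m eps th : PI < th < 2 * PI -> 0 < eps * th < PI/2 ->
  num_zeros m eps (gtrig eps th 1 1) 2.
Proof.
  intros hth hph. pose proof PI_RGT_0. destruct (sin_cos_gt0 _ hph) as [se ce].
  assert (sth : sin th < 0) by (apply sin_lt_0; lra).
  set (z := PI / (2 * th)).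
  assert (hz : 2 * th * z = PI) by (unfold z; field; lra).
  assert (hz0 : 0 < z < 1/2).
  { split; [apply Rdiv_lt_0_compat; lra|]. apply (Rmult_lt_reg_l (2 * th)); lra. }
  exists (PE1 z :: PE2 (1/2 - z) :: nil). split; [|split].
  - constructor; [cbn; intros [h|[]]; discriminate|].
    constructor; [cbn; auto | constructor].
  - reflexivity.
  - intros p. cbn [In]. split.
    + intros [<-|[<-|[]]]; cbn.
      * split; [lra|]. rewrite hz, sin_PI. ring.
      * split; [lra|]. replace (1/2 - (1/2 - z)) with z by ring. rewrite hz, sin_PI. ring.
    + destruct p as [x|x|j x]; cbn [valid_pt geval]; intros [hv e]; cbn in e.
      * left. rewrite Rmult_1_l in e. apply sin_eq_0_lt_2PI in e; [|split; nra].
        f_equal. apply (Rmult_eq_reg_l (2 * th)); lra.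
      * right; left. rewrite Rmult_1_l in e. apply sin_eq_0_lt_2PI in e; [|split; nra].
        f_equal. apply (Rmult_eq_reg_l (2 * th)); lra.
      * exfalso. destruct hv as [hj hx].
        assert (0 < cos (2 * th * (x - eps/2))) by (apply cos_gt_0; nra).
        assert (sin th / cos (eps * th) < 0).
        { apply Ropp_lt_cancel. rewrite Ropp_0, <- Rdiv_opp_l.
          apply Rdiv_lt_0_compat; lra. }
        replace ((1 + 1) * sin th / (2 * cos (eps * th))) with (sin th / cos (eps * th)) in e
          by (field; lra).
        replace (1 - 1) with 0 in e by ring. nra.
Qed.

Lemma eigenvalue_secular_root m eps mu t : 0 < eps < 1/3 -> 0 < t <= 3*PI/2 ->
  is_eigenvalue m eps mu -> mu <= (2 * t) * (2 * t) ->
  exists th, 0 < th <= t /\ mu = (2 * th) * (2 * th) /\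
    (even_secular m eps th = 0 \/ odd_secular m eps th = 0).
Proof.
  intros he ht [g [hg hg0]] hmu.
  destruct (Rle_lt_dec mu 0) as [hn|hp].
  { exfalso. apply hg0, (eigfun_nonpos_zero m eps mu g); lra || assumption. }
  set (th := sqrt mu / 2).
  assert (emu : mu = (2 * th) * (2 * th)).
  { unfold th. replace (2 * (sqrt mu / 2)) with (sqrt mu) by field. rewrite sqrt_sqrt; lra. }
  assert (hth : 0 < th <= t).
  { pose proof (sqrt_lt_R0 mu hp). pose proof (sqrt_le_1_alt _ _ hmu).
    rewrite sqrt_square in H0 by lra. unfold th. lra. }
  exists th. split; [exact hth | split; [exact emu |]].
  assert (hph := phase_bounds eps he th ltac:(lra)).
  rewrite emu in hg. destruct (eigfun_gtrig m eps th ltac:(lra) hph g hg) as [A [D hgD]].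
  destruct (proj1 (is_eigfun_gtrig m eps th ltac:(lra) hph A D) (is_eigfun_gext _ _ _ _ _ hgD hg))
    as [e1 e2].
  destruct (Req_dec (even_secular m eps th) 0) as [|hE]; [now left|].
  destruct (Req_dec (odd_secular m eps th) 0) as [|hO]; [now right|].
  exfalso. apply hg0.
  apply Rmult_integral in e1 as [e1|]; [|contradiction].
  apply Rmult_integral in e2 as [e2|]; [|contradiction].
  replace A with (0 * 0) in hgD by lra. replace D with (0 * 0) in hgD by lra.
  apply gext_geq, (gext_trans _ _ _ _ hgD).
  split; [|split]; intros; cbn; unfold Rdiv; ring.
Qed.

Section Spectrum.
Variables (m : nat) (eps t1 t2 t3 : R).
Hypothesis he : 0 < eps < 1/3.
Hypotheses (h1 : 0 < t1 < PI/2) (h2 : PI/2 < t2 < PI) (h3 : PI < t3 < 3*PI/2).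
Hypothesis hE : forall t, 0 < t <= 3*PI/2 -> (even_secular m eps t = 0 <-> t = t1 \/ t = t3).
Hypothesis hO : forall t, 0 < t <= 3*PI/2 -> (odd_secular m eps t = 0 <-> t = t2).

Lemma simple_eig_even th : th = t1 \/ th = t3 ->
  simple_eig m eps ((2 * th) * (2 * th)) (gtrig eps th 1 1).
Proof.
  intros ht. pose proof PI_RGT_0.
  assert (hth : 0 < th <= 3*PI/2) by (destruct ht as [->| ->]; lra).
  assert (hs : sin th <> 0).
  { destruct ht as [->| ->]; [apply Rgt_not_eq, sin_gt_0 | apply Rlt_not_eq, sin_lt_0]; lra. }
  apply simple_eig_gtrig; [lra | exact (phase_bounds eps he th hth) | exact hs | | ring |].
  - rewrite (proj2 (hE th hth) ht). ring.
  - intros A D _ hAD. apply Rmult_integral in hAD as [|hO0]; [lra|].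
    apply hO in hO0; [lra | exact hth].
Qed.

Lemma simple_eig_odd : simple_eig m eps ((2 * t2) * (2 * t2)) (gtrig eps t2 1 (-1)).
Proof.
  pose proof PI_RGT_0. assert (ht : 0 < t2 <= 3*PI/2) by lra.
  apply simple_eig_gtrig; [lra | exact (phase_bounds eps he t2 ht) | | ring | |].
  - apply Rgt_not_eq, sin_gt_0; lra.
  - rewrite (proj2 (hO t2 ht) eq_refl). ring.
  - intros A D hAD _. apply Rmult_integral in hAD as [|hE0]; [lra|].
    apply hE in hE0 as [|]; lra.
Qed.

Lemma eigenvalue_le_third mu : is_eigenvalue m eps mu -> mu <= (2 * t3) * (2 * t3) ->
  mu = (2 * t1) * (2 * t1) \/ mu = (2 * t2) * (2 * t2) \/ mu = (2 * t3) * (2 * t3).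
Proof.
  intros hmu hle. pose proof PI_RGT_0.
  destruct (eigenvalue_secular_root m eps mu t3 he ltac:(lra) hmu hle)
    as [th [hth [-> [hEth | hOth]]]].
  - apply hE in hEth as [-> | ->]; auto; lra.
  - apply hO in hOth as ->; auto; lra.
Qed.

End Spectrum.

Theorem lemma18 (m : nat) (hm : (1 <= m)%nat) :
  exists eps0, 0 < eps0 /\
  forall eps, 0 < eps < eps0 ->
  exists (lam1 lam2 lam3 : R) (f1 f2 f3 : gfun),
    lam1 < lam2 < lam3 /\
    (* the first three eigenvalues, all simple, with eigenfunctions f1 f2 f3 *)
    simple_eig m eps lam1 f1 /\ simple_eig m eps lam2 f2 /\
    simple_eig m eps lam3 f3 /\
    (forall mu, is_eigenvalue m eps mu -> mu <= lam3 ->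
       mu = lam1 \/ mu = lam2 \/ mu = lam3) /\
    geq m eps (psi_comp eps f2) (gopp f2) /\ num_zeros m eps f2 m /\
    geq m eps (psi_comp eps f3) f3 /\ num_zeros m eps f3 2.
Proof.
  exists (1/3). split; [lra|]. intros eps he.
  assert (hM : 0 < INR m) by (apply lt_0_INR; lia).
  pose proof PI_RGT_0.
  destruct (even_secular_roots m eps hM he) as [t1 [t3 [h1 [h3 hE]]]].
  destruct (odd_secular_root m eps hM he) as [t2 [h2 hO]].
  exists ((2 * t1) * (2 * t1)), ((2 * t2) * (2 * t2)), ((2 * t3) * (2 * t3)),
    (gtrig eps t1 1 1), (gtrig eps t2 1 (-1)), (gtrig eps t3 1 1).
  split; [split; nra|].
  split; [apply (simple_eig_even m eps t1 t2 t3); auto|].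
  split; [apply (simple_eig_odd m eps t1 t2 t3); auto|].
  split; [apply (simple_eig_even m eps t1 t2 t3); auto|].
  split; [apply (eigenvalue_le_third m eps t1 t2 t3); auto|].
  split; [apply gext_geq, psi_comp_gtrig_odd|].
  split; [apply num_zeros_gtrig_odd; [lra | apply phase_bounds; auto; lra]|].
  split; [apply gext_geq, psi_comp_gtrig|].
  apply num_zeros_gtrig_even; [lra | apply phase_bounds; auto; lra].
Qed.
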